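(* Let $\hat s:\Delta_{\mathcal Y}\times\mathcal Y\to\mathbb R\cup\{\pm\infty\}$ be a permutation-invariant regular classical scoring rule, $\mathcal Y=\{1,\dots,n\}$, and let $S=S[\hat s]$ be the corresponding spectral quantum score on $\mathbb C^n$. Then $S$ is truthful if and only if $\hat s$ is proper, and $S$ is strictly truthful if and only if $\hat s$ is strictly proper.
   Context: $\lambda(\rho)$ denotes the eigenvalues of $\rho$ in decreasing order; $\mathrm{Dens}(\mathbb C^n)$ the density matrices; $\langle X,Y\rangle=\mathrm{Tr}(X^*Y)$. A classical scoring rule $\hat s$ has expected score $\hat s(q;p)=\sum_yp_y\hat s(q,y)$ ($0\cdot\pm\infty=0$); it is proper if $\hat s(q;p)\le\hat s(p;p)$ for all $p,q\in\Delta_{\mathcal Y}$, strictly proper if strict for $q\neq p$, regular if $\hat s(q;p)\in\mathbb R\cup\{-\infty\}$ and $\hat s(p;p)\in\mathbb R$ for all $p,q$; permutation-invariant if $\hat s(p,y)=\hat s(\pi p,\pi_y)$ for every permutation $\pi$, $(\pi p)_y=p_{\pi_y}$. The spectral score $S[\hat s]=(s,\mu^{\mathrm{spec}})$: $\mu^{\mathrm{spec}}(\rho)=\{x_yx_y^*\}_{y\in\mathcal Y}$ for an arbitrary orthonormal eigenbasis with $\rho=\sum_y\lambda(\rho)_yx_yx_y^*$, and $s(\rho,y)=\hat s(\lambda(\rho),y)$; expected score $S(\rho';\rho)=\sum_y\langle\mu^{\mathrm{spec}}(\rho')_y,\rho\rangle s(\rho',y)$. $S$ is truthful if $S(\rho;\rho)\ge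 S(\rho';\rho)$ for all $\rho,\rho'$, strictly truthful if strict when $\rho'\neq\rho$. *)

From HB Require Import structures.
From mathcomp Require Import all_boot all_order all_fingroup all_algebra.
From mathcomp Require Import reals constructive_ereal.
From mathcomp.real_closed Require Import complex.

Set Implicit Arguments.
Unset Strict Implicit.
Unset Printing Implicit Defensive.

Import Order.TTheory GRing.Theory Num.Theory.
Local Open Scope ring_scope.
Local Open Scope sesquilinear_scope.

Section Defs.
Variables (R : realType) (n : nat).

Definition prob_vec (p : 'rV[R]_n) : Prop :=
  (forall y, 0 <= p ord0 y) /\ \sum_(y < n) p ord0 y = 1.

(** A classical scoring rule  s : Delta_Y x Y -> R U {+-oo}
    (only its values on Delta_Y matter). *)
Definition scoring_rule := 'rV[R]_n -> 'I_n -> \bar R.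

(** Expected score  s(q;p) = sum_y p_y s(q,y), with 0 * (+-oo) = 0
    (this is the convention of mathcomp's extended-real product). *)
Definition exp_score (s : scoring_rule) (q p : 'rV[R]_n) : \bar R :=
  (\sum_(y < n) (p ord0 y)%:E * s q y)%E.

Definition proper_score (s : scoring_rule) : Prop :=
  forall p q, prob_vec p -> prob_vec q -> (exp_score s q p <= exp_score s p p)%E.

Definition strictly_proper_score (s : scoring_rule) : Prop :=
  forall p q, prob_vec p -> prob_vec q -> q != p ->
    (exp_score s q p < exp_score s p p)%E.

Definition regular (s : scoring_rule) : Prop :=
  forall p q, prob_vec p -> prob_vec q ->
    exp_score s q p != +oo%E /\ exp_score s p p \is a fin_num.

Definition perm_vec (pi : 'S_n) (p : 'rV[R]_n) : 'rV[R]_n :=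
  \row_y p ord0 (pi y).

Definition perm_invariant (s : scoring_rule) : Prop :=
  forall (pi : 'S_n) p y, prob_vec p -> s p y = s (perm_vec pi p) ((pi^-1)%g y).

Definition density (rho : 'M[R[i]]_n) : Prop :=
  rho ^t* = rho /\
  (forall v : 'rV[R[i]]_n, 0 <= (v *m rho *m v ^t*) ord0 ord0) /\
  \tr rho = 1.

(** An eigenbasis choice assigns to each matrix rho a matrix U rho whose rows
    x_y^* (y in Y) form the chosen orthonormal eigenbasis. *)
Definition eigbasis_choice := 'M[R[i]]_n -> 'M[R[i]]_n.

(** the values (U rho) rho (U rho)^* _{yy}; for a valid choice these are the
    eigenvalues lambda(rho)_y. *)
Definition lam (U : eigbasis_choice) (rho : 'M[R[i]]_n) : 'rV[R]_n :=
  \row_y complex.Re ((U rho *m rho *m (U rho) ^t*) y y).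

Definition valid_eigbasis (U : eigbasis_choice) : Prop :=
  forall rho, density rho ->
    [/\ U rho \is unitarymx,
        rho = (U rho) ^t* *m diag_mx (map_mx (real_complex R) (lam U rho)) *m U rho
      & forall i j : 'I_n, (i <= j)%N -> lam U rho ord0 j <= lam U rho ord0 i].

(** mu^spec(rho)_y = x_y x_y^*  (x_y is the column vector (row y (U rho))^* ). *)
Definition mu_spec (U : eigbasis_choice) (rho : 'M[R[i]]_n) (y : 'I_n)
  : 'M[R[i]]_n :=
  (row y (U rho)) ^t* *m row y (U rho).

Definition hs_inner (X Y : 'M[R[i]]_n) : R[i] := \tr (X ^t* *m Y).

(** Expected spectral score S(rho';rho) = sum_y <mu_y(rho'), rho> s(lambda(rho'), y);
    the inner products are real for Hermitian arguments, we take their real part. *)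
Definition spec_score (s : scoring_rule) (U : eigbasis_choice)
  (rho' rho : 'M[R[i]]_n) : \bar R :=
  (\sum_(y < n) (complex.Re (hs_inner (mu_spec U rho' y) rho))%:E
                  * s (lam U rho') y)%E.

Definition truthful (s : scoring_rule) (U : eigbasis_choice) : Prop :=
  forall rho rho', density rho -> density rho' ->
    (spec_score s U rho' rho <= spec_score s U rho rho)%E.

Definition strictly_truthful (s : scoring_rule) (U : eigbasis_choice) : Prop :=
  forall rho rho', density rho -> density rho' -> rho' != rho ->
    (spec_score s U rho' rho < spec_score s U rho rho)%E.

End Defs.

Lemma mul0e_check (R : realType) (x : \bar R) : (0%:E * x = 0)%E.
Proof. exact: mul0e. Qed.

(* For density matrices [rho], [rho'] let [r] be the diagonal of [rho] in the chosen
   eigenbasis of [rho'].  Then [S(rho';rho) = s(lambda(rho'); r)], and [r = D lambda(rho)] for the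
   doubly stochastic matrix [D = |U(rho') U(rho)^*|^2], so [r] is majorized by [lambda(rho)].
   Sorting the scores [s(r, .)] decreasingly, Abel summation yields a permutation [pi] with
   [s(r; r) <= s(r; pi lambda(rho))]; regularity makes the [-oo] scores carry no weight.
   Properness and permutation invariance then give
     S(rho';rho) = s(lambda'; r) <= s(r; r) <= s(r; pi lambda) <= s(pi lambda; pi lambda)
                 = S(rho;rho),
   and equality throughout forces [lambda(rho') = r = pi lambda(rho)], hence [rho' = rho] by
   comparing Frobenius norms.  Conversely, any [q] and [p] arise as [lambda(rho')] and [r] by
   taking [rho'] diagonal and [rho] diagonal in the eigenbasis of [rho']. *)

From HB Require Import structures.
From mathcomp Require Import all_boot all_order all_fingroup all_algebra.
From mathcomp Require Import reals constructive_ereal.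
From mathcomp.real_closed Require Import complex.
From mathcomp Require Import ring.

Set Implicit Arguments.
Unset Strict Implicit.
Unset Printing Implicit Defensive.

Import Order.TTheory GRing.Theory Num.Theory.
Local Open Scope ring_scope.

Lemma exists_sorting_perm d (T : orderType d) N (f : 'I_N -> T) :
  exists s : 'S_N, forall i j : 'I_N, (i <= j)%N -> (f (s j) <= f (s i))%O.
Proof.
pose r i j := (f j <= f i)%O.
have r_total : total r by move=> i j; rewrite /r le_total.
have r_trans : transitive r by move=> i j k; rewrite /r => ji kj; exact: le_trans kj ji.
pose srt := sort r (enum 'I_N).
have size_srt : size srt = N by rewrite size_sort size_enum_ord.
pose g k := nth k srt k.
have gE (k x0 : 'I_N) : g k = nth x0 srt k.
  by rewrite /g (set_nth_default x0) // size_srt.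
have g_inj : injective g.
  move=> i j; rewrite (gE j i) /g => /eqP.
  by rewrite nth_uniq ?size_srt ?sort_uniq ?enum_uniq // => /eqP /val_inj.
exists (perm g_inj) => i j ij; rewrite !permE (gE i i) (gE j i).
have r_refl : reflexive r by move=> k; rewrite /r.
apply: (sorted_leq_nth r_trans r_refl i (sort_sorted r_total _));
  by rewrite ?inE ?size_srt.
Qed.

Lemma downward_closed_prefix N (P : pred nat) :
  (forall k, (k.+1 < N)%N -> P k.+1 -> P k) ->
  exists2 m, (m <= N)%N & forall k, (k < N)%N -> P k = (k < m)%N.
Proof.
move=> P_down.
have P_le j k : (j <= k < N)%N -> P k -> P j.
  elim: k => [|k IHk] /andP[jk kN]; first by move: jk; rewrite leqn0 => /eqP ->.
  move: jk; rewrite leq_eqVlt => /orP[/eqP -> // | jk] Pk.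
  by apply: IHk; [rewrite (jk : (j <= k)%N) ltnW | exact: P_down].
pose m := find (predC P) (iota 0 N).
have mN : (m <= N)%N by rewrite -[X in (_ <= X)%N](size_iota 0 N) find_size.
exists m => // k kN; case: ltnP => [km | mk].
  by have := before_find 0%N km; rewrite nth_iota // add0n => /negbFE.
have m_lt_N : (m < N)%N := leq_ltn_trans mk kN.
have Pm : ~~ P m.
  have has_nP : has (predC P) (iota 0 N) by rewrite has_find size_iota.
  by have := nth_find 0%N has_nP; rewrite nth_iota.
by apply/negbTE; apply: contra Pm; apply: P_le; rewrite mk.
Qed.

Lemma sum_ord_cut (V : nmodType) (F : nat -> V) m N :
  (m <= N)%N -> (forall k, (m <= k < N)%N -> F k = 0) ->
  \sum_(k < N) F k = \sum_(k < m) F k.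
Proof.
move=> mN F0; rewrite (big_ord_widen N F mN) [RHS]big_mkcond; apply: eq_bigr => i _.
by case: ifP => // /negbT; rewrite -leqNgt => mi; rewrite F0 // mi ltn_ord.
Qed.

Section Majorization.
Variable R : realFieldType.

Definition nonincreasing_ord N (mu : 'I_N -> R) :=
  forall i j : 'I_N, (i <= j)%N -> mu j <= mu i.

(* For nonincreasing [mu] this is weak majorization of [x] by [mu]. *)
Definition prefix_dominated N (x mu : 'I_N -> R) :=
  forall (s : 'S_N) j, (j <= N)%N ->
    \sum_(i < N | (i < j)%N) x (s i) <= \sum_(i < N | (i < j)%N) mu i.

Definition doubly_stochastic N (D : 'I_N -> 'I_N -> R) :=
  [/\ forall y z, 0 <= D y z, forall y, \sum_z D y z = 1 & forall z, \sum_y D y z = 1].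

Lemma ler_sum_mul_majorized (x l b : nat -> R) m :
  (forall k, (k.+1 < m)%N -> b k.+1 <= b k) ->
  (forall j, (j <= m)%N -> \sum_(k < j) x k <= \sum_(k < j) l k) ->
  \sum_(k < m) x k = \sum_(k < m) l k ->
  \sum_(k < m) x k * b k <= \sum_(k < m) l k * b k.
Proof.
move=> b_decr x_le_l sum_eq.
pose gap j := \sum_(k < j) l k - \sum_(k < j) x k.
have abel j : (0 < j <= m)%N -> gap j * b j.-1 <= \sum_(k < j) (l k - x k) * b k.
  elim: j => [//|[|j] IHj] /andP[_ jm]; first by rewrite /gap !big_ord1.
  have {}IHj := IHj (ltnW jm).
  rewrite /gap !(big_ord_recr j.+1) /=.
  apply: le_trans (lerD IHj (lexx ((l j.+1 - x j.+1) * b j.+1))).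
  have gap_ge0 : 0 <= gap j.+1 by rewrite subr_ge0 x_le_l // ltnW.
  rewrite -subr_ge0 /gap.
  set Sl := \sum_(i < j.+1) l i; set Sx := \sum_(i < j.+1) x i.
  have -> : (Sl - Sx) * b j + (l j.+1 - x j.+1) * b j.+1 - (Sl + l j.+1 - (Sx + x j.+1)) * b j.+1
    = (Sl - Sx) * (b j - b j.+1) by ring.
  by rewrite mulr_ge0 // subr_ge0 b_decr.
case: m b_decr x_le_l sum_eq abel => [|m] _ _ sum_eq abel; first by rewrite !big_ord0.
rewrite -subr_ge0 -sumrB; under eq_bigr do rewrite -mulrBl.
by have := abel m.+1 (leqnn _); rewrite /gap sum_eq subrr mul0r.
Qed.

Lemma ler_sum_weighted_prefix N (mu c : 'I_N -> R) (k : nat) :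
  nonincreasing_ord mu -> (forall z, 0 <= c z <= 1) -> \sum_z c z = k%:R ->
  \sum_z c z * mu z <= \sum_(z < N | (z < k)%N) mu z.
Proof.
move=> mu_decr c01 c_sum.
have kN : (k <= N)%N.
  rewrite -(ler_nat R) -c_sum -[N in N%:R]card_ord -sum1_card natr_sum.
  by apply: ler_sum => z _; case/andP: (c01 z).
have [t t_le t_ge] : exists2 t, (forall z : 'I_N, (z < k)%N -> t <= mu z) &
                                (forall z : 'I_N, (k <= z)%N -> mu z <= t).
  case: (ltnP k N) => [kN' | Nk].
    by exists (mu (Ordinal kN')) => z kz; apply: mu_decr => //=; exact: ltnW.
  case: N mu c mu_decr c01 c_sum kN Nk => [|N] mu c mu_decr _ _ _ Nk.
    by exists 0 => -[].
  exists (mu ord_max) => z kz; first by apply: mu_decr; rewrite -ltnS.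
  by move: (ltn_ord z); rewrite ltnNge (leq_trans Nk kz).
have card_prefix : \sum_(z < N) ((z < k)%N)%:R = k%:R :> R.
  transitivity (\sum_(z < N | (z < k)%N) (1 : R)).
    by rewrite [RHS]big_mkcond; apply: eq_bigr => z _; case: ifP.
  by rewrite -(big_ord_widen N (fun _ => 1 : R) kN) sumr_const card_ord.
(* Moving mass above the threshold [t] can only lose weight. *)
have : \sum_z (c z - ((z < k)%N)%:R) * mu z <= \sum_z (c z - ((z < k)%N)%:R) * t.
  apply: ler_sum => z _; case/andP: (c01 z) => c0 c1; case: ltnP => kz.
    by rewrite mulrC [leRHS]mulrC ler_wnM2r ?subr_le0 ?t_le.
  by rewrite subr0 ler_wpM2l ?t_ge.
rewrite -mulr_suml sumrB card_prefix c_sum subrr mul0r => le0.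
rewrite -subr_le0 [X in _ - X]big_mkcond -sumrB /=.
rewrite (eq_bigr (fun z => (c z - ((z < k)%N)%:R) * mu z)) // => z _.
by rewrite mulrBl; case: ifP => _; rewrite ?mul1r ?mul0r.
Qed.

Lemma doubly_stochastic_prefix_dominated N (D : 'I_N -> 'I_N -> R) (mu x : 'I_N -> R) :
  doubly_stochastic D -> nonincreasing_ord mu ->
  (forall y, x y = \sum_z D y z * mu z) -> prefix_dominated x mu.
Proof.
move=> [D_ge0 D_row D_col] mu_decr xE s j jN.
pose c z := \sum_(i < N | (i < j)%N) D (s i) z.
have -> : \sum_(i < N | (i < j)%N) x (s i) = \sum_z c z * mu z.
  under eq_bigr do rewrite xE.
  by rewrite exchange_big /=; apply: eq_bigr => z _; rewrite mulr_suml.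
apply: ler_sum_weighted_prefix => // [z|].
  rewrite sumr_ge0 => [|i _]; last exact: D_ge0.
  rewrite -(D_col z) (reindex_inj (@perm_inj _ s)) /= [leRHS](bigID (fun i : 'I_N => (i < j)%N)) /=.
  by rewrite lerDl sumr_ge0.
rewrite /c exchange_big /=; under eq_bigr do rewrite D_row.
by rewrite -(big_ord_widen N (fun _ => 1 : R) jN) sumr_const card_ord.
Qed.

Lemma eq_from_prefix_sums N (f g : 'I_N -> R) :
  (forall j, (j <= N)%N -> \sum_(i < N | (i < j)%N) f i = \sum_(i < N | (i < j)%N) g i) ->
  f =1 g.
Proof.
move=> eq_prefix y; have := eq_prefix y.+1 (ltn_ord y).
rewrite (bigD1 y) //= [X in _ = X](bigD1 y) //=.
have prefixE (F : 'I_N -> R) :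
    \sum_(i < N | (i < y.+1)%N && (i != y)) F i = \sum_(i < N | (i < y)%N) F i.
  by apply: eq_bigl => i; rewrite ltnS andbC -val_eqE /= -ltn_neqAle.
by rewrite !prefixE (eq_prefix y (ltnW (ltn_ord y))) => /addIr.
Qed.

End Majorization.

Definition ord_ext (T : Type) (x0 : T) N (f : 'I_N -> T) (k : nat) : T :=
  oapp f x0 (insub k).

Lemma ord_extE (T : Type) (x0 : T) N (f : 'I_N -> T) (i : 'I_N) : ord_ext x0 f i = f i.
Proof. by rewrite /ord_ext valK. Qed.

Section ExtendedRearrangement.
Variable R : realType.
Local Open Scope ereal_scope.

Lemma lee_sum_mul_majorized N (x l : nat -> R) (b : nat -> \bar R) :
  (forall k, (0 <= x k)%R) -> (forall k, (0 <= l k)%R) ->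
  (forall k, (k.+1 < N)%N -> b k.+1 <= b k) -> (forall k, (k < N)%N -> b k != +oo) ->
  (forall j, (j <= N)%N -> (\sum_(k < j) x k <= \sum_(k < j) l k)%R) ->
  (\sum_(k < N) x k = \sum_(k < N) l k)%R ->
  \sum_(k < N) (x k)%:E * b k \is a fin_num ->
  \sum_(k < N) (x k)%:E * b k <= \sum_(k < N) (l k)%:E * b k.
Proof.
move=> x_ge0 l_ge0 b_decr b_ninfty x_le_l sum_eq fin_sum.
have [m mN b_fin] : exists2 m, (m <= N)%N & forall k, (k < N)%N -> (b k != -oo) = (k < m)%N.
  apply: downward_closed_prefix => k kN; apply: contra => /eqP bk.
  by rewrite -leeNy_eq -bk b_decr.
(* The finite total forces zero weight of [x] on the [-oo] tail, and then of [l] too. *)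
have x_tail k : (m <= k < N)%N -> x k = 0%R.
  case/andP=> mk kN; move: (b_fin k kN); rewrite ltnNge mk => /negbFE/eqP bk.
  move/sum_fin_numP: fin_sum => /(_ (Ordinal kN) (mem_index_enum _) isT) /=.
  rewrite bk; have := x_ge0 k; rewrite le_eqVlt => /orP[/eqP <- // | xk].
  by rewrite mulrNy gtr0_sg // mul1e.
have sum_x : (\sum_(k < N) x k = \sum_(k < m) x k)%R by apply: sum_ord_cut.
have sum_l : (\sum_(k < N) l k = \sum_(k < m) l k)%R.
  apply/eqP; rewrite eq_le; apply/andP; split.
    by rewrite -sum_eq sum_x; apply: x_le_l.
  rewrite (big_ord_widen N l mN) [leRHS](bigID (fun k : 'I_N => (k < m)%N)) /=.
  by rewrite lerDl sumr_ge0.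
have l_tail k : (m <= k < N)%N -> l k = 0%R.
  case/andP=> mk kN; have : (\sum_(i < N | ~~ (i < m)%N) l i = 0)%R.
    move: sum_l; rewrite (big_ord_widen N l mN) [LHS](bigID (fun k : 'I_N => (k < m)%N)) /=.
    by move/eqP; rewrite addrC -subr_eq0 addrK => /eqP.
  by move/psumr_eq0P => /(_ (fun i _ => l_ge0 i) (Ordinal kN)) ->; rewrite //= -leqNgt.
have b_fin_num k : (k < m)%N -> b k \is a fin_num.
  by move=> km; have kN := leq_trans km mN; rewrite fin_numE b_fin // km b_ninfty.
rewrite (@sum_ord_cut _ (fun k => (x k)%:E * b k) m N mN); last first.
  by move=> k /x_tail ->; rewrite mul0e.
rewrite (@sum_ord_cut _ (fun k => (l k)%:E * b k) m N mN); last first.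
  by move=> k /l_tail ->; rewrite mul0e.
have finE (c : nat -> R) : \sum_(k < m) (c k)%:E * b k = (\sum_(k < m) c k * fine (b k))%:E.
  by rewrite -sumEFin; apply: eq_bigr => k _; rewrite EFinM fineK ?b_fin_num.
rewrite !finE lee_fin; apply: (ler_sum_mul_majorized (b := fun k => fine (b k))).
- move=> k km; apply: fine_le; rewrite ?b_fin_num ?b_decr //; first exact: ltnW.
  exact: leq_trans km mN.
- by move=> j jm; apply/x_le_l/(leq_trans jm).
- by rewrite -sum_x -sum_l.
Qed.

Lemma exists_perm_lee_sum_mul N (r lam : 'I_N -> R) (a : 'I_N -> \bar R) :
  (forall y, 0 <= r y)%R -> (forall y, 0 <= lam y)%R -> (\sum_y r y = \sum_y lam y)%R ->
  prefix_dominated r lam -> (forall y, a y != +oo) ->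
  \sum_y (r y)%:E * a y \is a fin_num ->
  exists pi : 'S_N, \sum_y (r y)%:E * a y <= \sum_y (lam (pi y))%:E * a y.
Proof.
move=> r_ge0 lam_ge0 sum_eq r_lam a_ninfty fin_sum.
have [s a_sorted] := exists_sorting_perm a.
exists s^-1%g.
rewrite (reindex_inj (@perm_inj _ s)) [leRHS](reindex_inj (@perm_inj _ s)) /=.
under [leRHS]eq_bigr do rewrite permK.
pose b := ord_ext 0 (a \o s).
have sumE (c : 'I_N -> R) :
    \sum_i (c i)%:E * a (s i) = \sum_(k < N) (ord_ext 0%R c k)%:E * b k.
  by apply: eq_bigr => i _; rewrite /b !ord_extE.
have ext_ge0 (c : 'I_N -> R) k : (forall i, 0 <= c i)%R -> (0 <= ord_ext 0%R c k)%R.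
  by move=> c_ge0; rewrite /ord_ext; case: insub.
rewrite (reindex_inj (@perm_inj _ s)) /= in fin_sum.
rewrite (sumE (r \o s)) sumE; rewrite (sumE (r \o s)) in fin_sum.
apply: lee_sum_mul_majorized fin_sum => [k|k|k kN|k kN|j jN|].
- exact: ext_ge0 (fun i => r_ge0 (s i)).
- exact: ext_ge0 lam_ge0.
- have kN' := ltnW kN.
  rewrite /b -[k]/(val (Ordinal kN')) -[k.+1]/(val (Ordinal kN)) !ord_extE.
  exact: a_sorted.
- by rewrite /b -[k]/(val (Ordinal kN)) ord_extE; apply: a_ninfty.
- rewrite !(big_ord_widen N _ jN); have := r_lam s j jN.
  by congr (_ <= _)%R; apply: eq_bigr => i _; rewrite ord_extE.
- under eq_bigr do rewrite ord_extE.
  under [RHS]eq_bigr do rewrite ord_extE.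
  by rewrite -sum_eq [RHS](reindex_inj (@perm_inj _ s)).
Qed.

End ExtendedRearrangement.

Section UnitaryConjugation.
Variables (F : numClosedFieldType) (n : nat).
Local Open Scope sesquilinear_scope.

Lemma unitarymx1 : (1%:M : 'M[F]_n) \is unitarymx.
Proof. by apply/unitarymxP; rewrite trmx1 map_mx1 mulmx1. Qed.

Lemma unitarymx_tC_mul (V : 'M[F]_n) : V \is unitarymx -> V^t* *m V = 1%:M.
Proof. by move=> VU; rewrite -[V^t*]mul1mx mulmxKtV. Qed.

Lemma unitarymx_mul_tC (V W : 'M[F]_n) :
  V \is unitarymx -> W \is unitarymx -> V *m W^t* \is unitarymx.
Proof.
by move=> VU WU; apply: (@mul_unitarymx _ n n n V (W^t*) VU); rewrite trmxC_unitary.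
Qed.

Lemma row_quad_form m (V : 'M[F]_(m, n)) (rho : 'M[F]_n) y :
  (row y V *m rho *m (row y V)^t*) 0 0 = (V *m rho *m V^t*) y y.
Proof.
rewrite !mxE; apply: eq_bigr => j _; rewrite !mxE; congr (_ * _).
by apply: eq_bigr => k _; rewrite !mxE.
Qed.

Lemma mxtrace_mul_tC (A : 'M[F]_n) : \tr (A *m A^t*) = \sum_y \sum_z A y z * (A y z)^*.
Proof. by apply: eq_bigr => y _; rewrite !mxE; apply: eq_bigr => z _; rewrite !mxE. Qed.

Lemma mxtrace_unitary_conj (V rho : 'M[F]_n) : V \is unitarymx ->
  \tr ((V *m rho *m V^t*) *m (V *m rho *m V^t*)^t*) = \tr (rho *m rho^t*).
Proof.
move=> VU; rewrite !trmx_mul !map_mxM trmxCK !mulmxA mulmxKtV //.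
by rewrite -!mulmxA mxtrace_mulC !mulmxA mulmxKtV.
Qed.

Lemma offdiag_eq0_of_sum_abs2 (M : 'M[F]_n) :
  \sum_y \sum_z M y z * (M y z)^* = \sum_y M y y * (M y y)^* ->
  forall y z, z != y -> M y z = 0.
Proof.
move=> sum_eq y z zy.
have off0 : \sum_y \sum_(z | z != y) M y z * (M y z)^* = 0.
  apply: (addrI (\sum_y M y y * (M y y)^*)); rewrite addr0 -big_split /= -sum_eq.
  by apply: eq_bigr => i _; rewrite [RHS](bigD1 i).
move/psumr_eq0P: off0 => /(_ (fun i _ => sumr_ge0 _ (fun j _ => mul_conjC_ge0 _)) y isT).
move/psumr_eq0P => /(_ (fun j _ => mul_conjC_ge0 _) z zy) /eqP.
by rewrite mul_conjC_eq0 => /eqP.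
Qed.

End UnitaryConjugation.

Section DiagonalInBasis.
Variables (R : realType) (n : nat).
Local Notation C := R[i].
Local Open Scope sesquilinear_scope.

Definition diag_in (V rho : 'M[C]_n) : 'rV[R]_n := \row_y complex.Re ((V *m rho *m V^t*) y y).

Definition abs2_mx (X : 'M[C]_n) (y z : 'I_n) : R := complex.Re (X y z * (X y z)^*).

Definition rdiag_mx (mu : 'I_n -> R) : 'M[C]_n := diag_mx (\row_z (mu z)%:C%C).

Lemma density_quad_ge0 m (V : 'M[C]_(m, n)) rho y :
  density rho -> 0 <= (V *m rho *m V^t*) y y.
Proof. by case=> _ [rho_ge0 _]; rewrite -row_quad_form. Qed.

Lemma diag_inC (V rho : 'M[C]_n) y :
  density rho -> (diag_in V rho ord0 y)%:C%C = (V *m rho *m V^t*) y y.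
Proof. by move=> /(density_quad_ge0 V y) ge0; rewrite mxE RRe_real ?ger0_real. Qed.

Lemma diag_in_ge0 (V rho : 'M[C]_n) y : density rho -> 0 <= diag_in V rho ord0 y.
Proof. by move=> dens; rewrite -ler0c diag_inC // density_quad_ge0. Qed.

Lemma sum_diag_in (V rho : 'M[C]_n) :
  V \is unitarymx -> density rho -> \sum_y diag_in V rho ord0 y = 1.
Proof.
move=> VU dens; apply: (@complexI R); rewrite rmorph_sum /= rmorph1.
under eq_bigr do rewrite diag_inC //.
case: dens => _ [_ <-]; rewrite -/(mxtrace _) -mulmxA mxtrace_mulC.
by rewrite -mulmxA unitarymx_tC_mul // mulmx1.
Qed.

Lemma abs2_mxC (X : 'M[C]_n) y z : (abs2_mx X y z)%:C%C = X y z * (X y z)^*.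
Proof. by rewrite /abs2_mx RRe_real ?ger0_real ?mul_conjC_ge0. Qed.

Lemma abs2_mx_ge0 (X : 'M[C]_n) y z : 0 <= abs2_mx X y z.
Proof. by rewrite -ler0c abs2_mxC mul_conjC_ge0. Qed.

Lemma unitarymx_abs2_doubly_stochastic (X : 'M[C]_n) :
  X \is unitarymx -> doubly_stochastic (abs2_mx X).
Proof.
move=> XU; split=> [||z]; first exact: abs2_mx_ge0.
  move=> y; apply: (@complexI R); rewrite rmorph_sum /= rmorph1.
  under eq_bigr do rewrite abs2_mxC.
  have := congr1 (fun M : 'M[C]_n => M y y) (unitarymxP XU).
  by rewrite !mxE eqxx mulr1n => <-; apply: eq_bigr => z _; rewrite !mxE.
apply: (@complexI R); rewrite rmorph_sum /= rmorph1.
under eq_bigr do rewrite abs2_mxC.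
have := congr1 (fun M : 'M[C]_n => M z z) (unitarymx_tC_mul XU).
by rewrite !mxE eqxx mulr1n => <-; apply: eq_bigr => y _; rewrite !mxE mulrC.
Qed.

Lemma quad_conj_rdiag m (V : 'M[C]_(m, n)) (W : 'M[C]_n) (mu : 'I_n -> R) y :
  (V *m (W^t* *m rdiag_mx mu *m W) *m V^t*) y y =
  \sum_z (mu z)%:C%C * ((V *m W^t*) y z * ((V *m W^t*) y z)^*).
Proof.
have -> : V *m (W^t* *m rdiag_mx mu *m W) *m V^t* =
          (V *m W^t*) *m rdiag_mx mu *m (V *m W^t*)^t*.
  by rewrite trmx_mul map_mxM trmxCK !mulmxA.
rewrite mul_mx_diag !mxE; apply: eq_bigr => z _; rewrite !mxE.
by rewrite mulrAC mulrC.
Qed.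

Lemma diag_in_conj_rdiag (V W : 'M[C]_n) (mu : 'I_n -> R) y :
  diag_in V (W^t* *m rdiag_mx mu *m W) ord0 y = \sum_z abs2_mx (V *m W^t*) y z * mu z.
Proof.
rewrite mxE quad_conj_rdiag.
under eq_bigr do rewrite -abs2_mxC -rmorphM mulrC.
by rewrite -rmorph_sum.
Qed.

Lemma rdiag_mx_tC (mu : 'I_n -> R) : (rdiag_mx mu)^t* = rdiag_mx mu.
Proof.
apply/matrixP => i j; rewrite !mxE eq_sym.
case: eqP => [->|_]; rewrite ?mulr1n ?mulr0n ?conjC0 //.
by rewrite conj_Creal // complex_real.
Qed.

Lemma density_conj_rdiag (W : 'M[C]_n) (mu : 'I_n -> R) :
  W \is unitarymx -> (forall z, 0 <= mu z) -> \sum_z mu z = 1 ->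
  density (W^t* *m rdiag_mx mu *m W).
Proof.
move=> WU mu_ge0 mu_sum; split; [|split].
- by rewrite !trmx_mul !map_mxM trmxCK rdiag_mx_tC mulmxA.
- move=> v; rewrite quad_conj_rdiag; apply: sumr_ge0 => z _.
  by rewrite mulr_ge0 ?mul_conjC_ge0 // ler0c.
- rewrite mxtrace_mulC mulmxA (unitarymxP WU) mul1mx mxtrace_diag.
  by under eq_bigr do rewrite mxE; rewrite -rmorph_sum mu_sum.
Qed.

Lemma unitary_conj_rdiag (W : 'M[C]_n) (mu : 'I_n -> R) :
  W \is unitarymx -> W *m (W^t* *m rdiag_mx mu *m W) *m W^t* = rdiag_mx mu.
Proof. by move=> WU; rewrite !mulmxA (unitarymxP WU) mul1mx mulmxtVK. Qed.

Lemma diag_in_rdiag (W : 'M[C]_n) (mu : 'I_n -> R) y :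
  W \is unitarymx -> diag_in W (W^t* *m rdiag_mx mu *m W) ord0 y = mu y.
Proof. by move=> WU; rewrite mxE unitary_conj_rdiag // !mxE eqxx mulr1n. Qed.

Lemma diag_in_prob (V rho : 'M[C]_n) :
  V \is unitarymx -> density rho -> prob_vec (diag_in V rho).
Proof. by move=> VU dens; split=> [y|]; [apply: diag_in_ge0 | apply: sum_diag_in]. Qed.

Lemma lam_diag_in (U : eigbasis_choice R n) rho : lam U rho = diag_in (U rho) rho.
Proof. by []. Qed.

Lemma lam_prob (U : eigbasis_choice R n) rho :
  valid_eigbasis U -> density rho -> prob_vec (lam U rho).
Proof.
by move=> valid dens; rewrite lam_diag_in; apply: diag_in_prob => //; case: (valid rho dens).
Qed.

Lemma eigen_decomposition (U : eigbasis_choice R n) rho : valid_eigbasis U -> density rho ->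
  rho = (U rho)^t* *m rdiag_mx (lam U rho ord0) *m U rho.
Proof.
move=> valid dens; have [_ rho_eq _] := valid rho dens.
rewrite {1}rho_eq.
suff -> : map_mx (real_complex R) (lam U rho) = \row_z (lam U rho ord0 z)%:C%C by [].
by apply/matrixP => i j; rewrite (ord1 i) !mxE.
Qed.

Lemma prefix_dominated_diag_in (U : eigbasis_choice R n) (V : 'M[C]_n) rho :
  valid_eigbasis U -> density rho -> V \is unitarymx ->
  prefix_dominated (diag_in V rho ord0) (lam U rho ord0).
Proof.
move=> valid dens VU; have [U_unitary _ lam_decr] := valid rho dens.
apply: (doubly_stochastic_prefix_dominated (D := abs2_mx (V *m (U rho)^t*))) => //.
  by apply: unitarymx_abs2_doubly_stochastic; rewrite unitarymx_mul_tC.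
by move=> y; rewrite {1}(eigen_decomposition valid dens) diag_in_conj_rdiag.
Qed.

(* [lam] and [mu \o t] weakly majorize each other, so their prefix sums agree. *)
Lemma lam_conj_rdiag (U : eigbasis_choice R n) (W : 'M[C]_n) (mu : 'I_n -> R) (t : 'S_n) :
  valid_eigbasis U -> W \is unitarymx -> (forall z, 0 <= mu z) -> \sum_z mu z = 1 ->
  nonincreasing_ord (mu \o t) ->
  forall y, lam U (W^t* *m rdiag_mx mu *m W) ord0 y = mu (t y).
Proof.
move=> valid WU mu_ge0 mu_sum mu_decr.
set rho := W^t* *m rdiag_mx mu *m W.
have dens : density rho by apply: density_conj_rdiag.
have [VU _ _] := valid rho dens.
apply: eq_from_prefix_sums => j jn; apply/eqP; rewrite eq_le; apply/andP; split.
- have := @doubly_stochastic_prefix_dominated _ _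
    (fun y k => abs2_mx (U rho *m W^t*) y (t k)) (mu \o t) (lam U rho ord0).
  move=> /(_ _ mu_decr _ 1%g j jn); under eq_bigr do rewrite perm1; apply=> [|y].
    have [D_ge0 D_row D_col] := unitarymx_abs2_doubly_stochastic (unitarymx_mul_tC VU WU).
    split=> [y k|y|k]; [exact: D_ge0 | | exact: D_col].
    by rewrite -(D_row y) [RHS](reindex_inj (@perm_inj _ t)).
  rewrite lam_diag_in diag_in_conj_rdiag (reindex_inj (@perm_inj _ t)).
  by apply: eq_bigr.
- have := prefix_dominated_diag_in valid dens WU t jn.
  by congr (_ <= _); apply: eq_bigr => i _; rewrite diag_in_rdiag.
Qed.

Lemma sum_abs2_rdiag (mu : 'I_n -> R) :
  \sum_y \sum_z rdiag_mx mu y z * (rdiag_mx mu y z)^* = \sum_y (mu y)%:C%C * ((mu y)%:C%C)^*.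
Proof.
apply: eq_bigr => y _; rewrite (bigD1 y) //= big1 ?addr0 => [|z /negbTE zy].
  by rewrite !mxE eqxx mulr1n.
by rewrite !mxE eq_sym zy mulr0n mul0r.
Qed.

(* Conjugation preserves the Frobenius norm, so a diagonal equal to a permutation of
   the spectrum leaves no room for off-diagonal entries. *)
Lemma eq_of_diag_in (U : eigbasis_choice R n) rho rho' (pi : 'S_n) :
  valid_eigbasis U -> density rho -> density rho' ->
  diag_in (U rho') rho = perm_vec pi (lam U rho) -> lam U rho' = diag_in (U rho') rho ->
  rho' = rho.
Proof.
move=> valid dens dens' diag_perm lam'E.
have [VU _ _] := valid rho' dens'; have [UU _ _] := valid rho dens.
set V := U rho' in VU diag_perm lam'E *; set M := V *m rho *m V^t*.
have Mdiag y : M y y = (lam U rho ord0 (pi y))%:C%C.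
  by rewrite -diag_inC // diag_perm mxE.
have UD : U rho *m rho *m (U rho)^t* = rdiag_mx (lam U rho ord0).
  by rewrite {2}(eigen_decomposition valid dens) unitary_conj_rdiag.
have : \sum_y \sum_z M y z * (M y z)^* = \sum_y M y y * (M y y)^*.
  rewrite -mxtrace_mul_tC mxtrace_unitary_conj // -(mxtrace_unitary_conj _ UU) UD.
  rewrite mxtrace_mul_tC sum_abs2_rdiag (reindex_inj (@perm_inj _ pi)) /=.
  by apply: eq_bigr => y _; rewrite Mdiag.
move/offdiag_eq0_of_sum_abs2 => M_offdiag.
have M_rdiag : M = rdiag_mx (lam U rho' ord0).
  apply/matrixP => y z; rewrite [RHS]mxE [in RHS]mxE; case: (eqVneq y z) => [<-|yz].
    by rewrite mulr1n lam'E diag_inC.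
  by rewrite mulr0n M_offdiag // eq_sym.
rewrite {1}(eigen_decomposition valid dens') -/V -M_rdiag /M.
by rewrite !mulmxA unitarymx_tC_mul // mul1mx mulmxKtV.
Qed.

Lemma hs_inner_mu_spec (U : eigbasis_choice R n) rho' rho y :
  hs_inner (mu_spec U rho' y) rho = (U rho' *m rho *m (U rho')^t*) y y.
Proof.
rewrite /hs_inner /mu_spec trmx_mul map_mxM trmxCK -mulmxA mxtrace_mulC.
by rewrite /mxtrace big_ord1 row_quad_form.
Qed.

Lemma spec_score_diag_in (s : scoring_rule R n) (U : eigbasis_choice R n) rho' rho :
  spec_score s U rho' rho = exp_score s (lam U rho') (diag_in (U rho') rho).
Proof. by apply: eq_bigr => y _; rewrite hs_inner_mu_spec [in RHS]mxE. Qed.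

Lemma spec_score_self (s : scoring_rule R n) (U : eigbasis_choice R n) rho :
  spec_score s U rho rho = exp_score s (lam U rho) (lam U rho).
Proof. exact: spec_score_diag_in. Qed.

End DiagonalInBasis.

Section SpectralScore.
Variables (R : realType) (n : nat) (s : scoring_rule R n) (U : eigbasis_choice R n).
Hypothesis s_inv : perm_invariant s.
Hypothesis s_reg : regular s.
Hypothesis U_valid : valid_eigbasis U.
Local Open Scope sesquilinear_scope.

Lemma perm_vec_prob (pi : 'S_n) (p : 'rV[R]_n) : prob_vec p -> prob_vec (perm_vec pi p).
Proof.
case=> p_ge0 p_sum; split=> [y|]; first by rewrite mxE.
by rewrite -p_sum [RHS](reindex_inj (@perm_inj _ pi)); apply: eq_bigr => y _; rewrite mxE.
Qed.

Lemma exp_score_perm (pi : 'S_n) (p q : 'rV[R]_n) :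
  prob_vec q -> exp_score s (perm_vec pi q) (perm_vec pi p) = exp_score s q p.
Proof.
move=> qP; rewrite /exp_score [RHS](reindex_inj (@perm_inj _ pi)).
by apply: eq_bigr => y _; rewrite mxE (s_inv pi (pi y) qP) permK.
Qed.

Lemma delta_prob (y : 'I_n) : prob_vec (\row_z ((z == y)%:R : R)).
Proof.
split=> [z|]; first by rewrite mxE ler0n.
rewrite (bigD1 y) //= big1 ?addr0 => [|z /negbTE zy]; by rewrite mxE ?eqxx ?zy.
Qed.

Lemma score_neq_pinfty (q : 'rV[R]_n) y : prob_vec q -> s q y != +oo%E.
Proof.
move=> qP; have := (s_reg (delta_prob y) qP).1.
rewrite /exp_score (bigD1 y) //= big1 ?adde0 => [|z /negbTE zy].
  by rewrite mxE eqxx mul1e.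
by rewrite mxE zy mul0e.
Qed.

Lemma strictly_proper_proper : strictly_proper_score s -> proper_score s.
Proof. by move=> sproper p q pP qP; case: (eqVneq q p) => [-> //|qp]; exact/ltW/sproper. Qed.

(* The diagonal of [rho] in the eigenbasis of [rho'] is majorized by the spectrum of [rho]. *)
Lemma exists_perm_exp_score_le rho rho' : density rho -> density rho' ->
  exists pi : 'S_n, (exp_score s (diag_in (U rho') rho) (diag_in (U rho') rho)
                      <= exp_score s (diag_in (U rho') rho) (perm_vec pi (lam U rho)))%E.
Proof.
move=> dens dens'; have [VU _ _] := U_valid dens'.
set r := diag_in (U rho') rho; have [r_ge0 r_sum] : prob_vec r by apply: diag_in_prob.
have [lam_ge0 lam_sum] := lam_prob U_valid dens.
have [|pi le_pi] := exists_perm_lee_sum_mul r_ge0 lam_ge0 _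
  (prefix_dominated_diag_in U_valid dens VU) (fun y => score_neq_pinfty y (conj r_ge0 r_sum))
  (s_reg (conj r_ge0 r_sum) (conj r_ge0 r_sum)).2; first by rewrite r_sum lam_sum.
by exists pi; rewrite /exp_score; under [X in (_ <= X)%E]eq_bigr do rewrite mxE.
Qed.

Lemma truthful_of_proper : proper_score s -> truthful s U.
Proof.
move=> proper rho rho' dens dens'; rewrite spec_score_diag_in spec_score_self.
have [VU _ _] := U_valid dens'.
have rP := diag_in_prob VU dens; have lP := lam_prob U_valid dens.
have [pi le_pi] := exists_perm_exp_score_le dens dens'.
rewrite -(exp_score_perm pi (lam U rho) lP).
apply: le_trans (proper _ _ rP (lam_prob U_valid dens')) _.
exact: le_trans le_pi (proper _ _ (perm_vec_prob pi lP) rP).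
Qed.

Lemma strictly_truthful_of_strictly_proper :
  strictly_proper_score s -> strictly_truthful s U.
Proof.
move=> sproper rho rho' dens dens' rho_neq; rewrite spec_score_diag_in spec_score_self.
have proper := strictly_proper_proper sproper.
have [VU _ _] := U_valid dens'.
have rP := diag_in_prob VU dens; have lP := lam_prob U_valid dens.
have l'P := lam_prob U_valid dens'.
have [pi le_pi] := exists_perm_exp_score_le dens dens'.
have plP := perm_vec_prob pi lP; rewrite -(exp_score_perm pi (lam U rho) lP).
have [r_eq | r_neq] := eqVneq (diag_in (U rho') rho) (perm_vec pi (lam U rho)); last first.
  exact: le_lt_trans (proper _ _ rP l'P) (le_lt_trans le_pi (sproper _ _ plP rP r_neq)).
have [l'_eq | l'_neq] := eqVneq (lam U rho') (diag_in (U rho') rho).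
  by move: rho_neq; rewrite (eq_of_diag_in U_valid dens dens' r_eq l'_eq) eqxx.
exact: lt_le_trans (sproper _ _ rP l'P l'_neq) (le_trans le_pi (proper _ _ plP rP)).
Qed.

(* Realize [q] as the spectrum of [rho'] and [p] as the diagonal of [rho] in the
   eigenbasis of [rho'], both up to the sorting permutation of [q]. *)
Lemma exp_score_as_spec_score p q : prob_vec p -> prob_vec q ->
  exists rho rho', [/\ density rho, density rho',
    spec_score s U rho' rho = exp_score s q p,
    spec_score s U rho rho = exp_score s p p & (q != p -> rho' != rho)].
Proof.
move=> pP qP; have [sg q_sorted] := exists_sorting_perm (q ord0).
set q' := perm_vec sg q; set p' := perm_vec sg p.
have [q'_ge0 q'_sum] := perm_vec_prob sg qP; have [p'_ge0 p'_sum] := perm_vec_prob sg pP.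
pose rho' := 1%:M^t* *m rdiag_mx (q' ord0) *m 1%:M.
have dens' : density rho' by apply: density_conj_rdiag => //; exact: unitarymx1.
have [VU _ _] := U_valid dens'.
pose rho := (U rho')^t* *m rdiag_mx (p' ord0) *m U rho'.
have dens : density rho by apply: density_conj_rdiag.
have lam'E : lam U rho' = q'.
  apply/matrixP => o y; rewrite (ord1 o) /rho' (@lam_conj_rdiag _ _ U _ _ 1%g) ?perm1 //.
    exact: unitarymx1.
  by move=> j k jk; rewrite /= !perm1 !mxE q_sorted.
have [tau p'_sorted] := exists_sorting_perm (p' ord0).
have lamE : lam U rho = perm_vec tau p'.
  apply/matrixP => o y; rewrite (ord1 o) /rho [RHS]mxE.
  exact: (lam_conj_rdiag U_valid VU p'_ge0 p'_sum p'_sorted).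
have diagE : diag_in (U rho') rho = p' by apply/matrixP => o y; rewrite (ord1 o) diag_in_rdiag.
exists rho, rho'; split=> //.
- by rewrite spec_score_diag_in lam'E diagE exp_score_perm.
- by rewrite spec_score_self lamE !exp_score_perm // perm_vec_prob.
- apply: contra_neq => rho_eq; apply/matrixP => o y; rewrite (ord1 o).
  have : q' = p' by rewrite -lam'E -diagE lam_diag_in [X in diag_in _ X]rho_eq.
  by move/(congr1 (fun v : 'rV_n => v ord0 (sg^-1 y)%g)); rewrite !mxE permKV.
Qed.

Lemma proper_of_truthful : truthful s U -> proper_score s.
Proof.
move=> truth p q pP qP.
by have [rho [rho' [dens dens' <- <- _]]] := exp_score_as_spec_score pP qP; apply: truth.
Qed.

Lemma strictly_proper_of_strictly_truthful :
  strictly_truthful s U -> strictly_proper_score s.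
Proof.
move=> truth p q pP qP qp.
have [rho [rho' [dens dens' <- <- rho_neq]]] := exp_score_as_spec_score pP qP.
exact: truth (rho_neq qp).
Qed.

End SpectralScore.

Theorem theorem4p4 (R : realType) (n : nat) (s : scoring_rule R n) :
  perm_invariant s -> regular s ->
  forall U : eigbasis_choice R n, valid_eigbasis U ->
    (truthful s U <-> proper_score s) /\ (strictly_truthful s U <-> strictly_proper_score s).
Proof.
move=> s_inv s_reg U U_valid; split; split.
- exact: proper_of_truthful.
- exact: truthful_of_proper.
- exact: strictly_proper_of_strictly_truthful.
- exact: strictly_truthful_of_strictly_proper.
Qed.
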